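(* Let $\mathbf{H}$ be a finite commutative semihypergroup with states $e_1,\dots,e_n$ that is derived from a group. Then for each $i$, all diagonal entries of the matrix $A_i$ are equal: $a_{i,j}(j)=a_{i,i}(i)$ for all $i,j\in\{1,\dots,n\}$.
   Context: A finite commutative semihypergroup $\mathbf{H}$ with $n$ states $e_1,\dots,e_n$ is given by a convolution $e_i*e_j=\sum_{k=1}^n a_{i,j}(k)e_k$ ($i,j=1,\dots,n$), extended bilinearly, where $a_{i,j}(k)\ge 0$, $\sum_{k=1}^n a_{i,j}(k)=1$ for all $i,j$, the convolution is associative and commutative ($a_{i,j}(k)=a_{j,i}(k)$). Let $a_{i,j}\in\mathbb{R}^n$ denote the column vector $(a_{i,j}(1),\dots,a_{i,j}(n))^T$; let $A_i$ be the $n\times n$ matrix with columns $a_{i,1},\dots,a_{i,n}$ (so its $(k,j)$ entry is $a_{i,j}(k)$) and $B_i$ the matrix with columns $a_{1,i},\dots,a_{n,i}$. $\mathbf{H}$ is called derived from a group if it satisfies condition (A): the set $\{a_{i,j}: 1\le i,j\le n\}$ contains exactly $n$ distinct vectors, and for each $i$ the columns of $A_i$ are linearly independent and the columns of $B_i$ are linearly independent. *)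

(* Coefficients in an arbitrary real field R (the paper: reals). *)
From HB Require Import structures.
From mathcomp Require Import all_boot all_order all_algebra.
Set Implicit Arguments. Unset Strict Implicit. Unset Printing Implicit Defensive.
Import Order.TTheory GRing.Theory Num.Theory.
Local Open Scope ring_scope.

(* Structure constants: a i j k = a_{i,j}(k), i.e. e_i * e_j = sum_k a i j k e_k. *)
Definition hyper_coeffs (R : realFieldType) (n : nat) := 'I_n -> 'I_n -> 'I_n -> R.

Definition is_comm_semihypergroup (R : realFieldType) (n : nat)
  (a : hyper_coeffs R n) : Prop :=
  [/\ (forall i j k, 0 <= a i j k),
      (forall i j, \sum_(k < n) a i j k = 1),
      (forall i j k, a i j k = a j i k) &
      (* associativity: (e_i*e_j)*e_l = e_i*(e_j*e_l), coefficient of e_m *)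
      (forall i j l m,
         \sum_(k < n) a i j k * a k l m = \sum_(k < n) a j l k * a i k m)].

Definition avec (R : realFieldType) (n : nat) (a : hyper_coeffs R n)
  (i j : 'I_n) : 'cV[R]_n := \col_(k < n) a i j k.

Definition Amx (R : realFieldType) (n : nat) (a : hyper_coeffs R n) (i : 'I_n)
  : 'M[R]_n := \matrix_(k < n, j < n) a i j k.
Definition Bmx (R : realFieldType) (n : nat) (a : hyper_coeffs R n) (i : 'I_n)
  : 'M[R]_n := \matrix_(k < n, j < n) a j i k.

Definition cols_indep (R : realFieldType) (n : nat) (M : 'M[R]_n) : bool :=
  row_free M^T.

Definition derived_from_group (R : realFieldType) (n : nat)
  (a : hyper_coeffs R n) : Prop :=
  [/\ size (undup [seq avec a ij.1 ij.2 | ij <- enum [set: 'I_n * 'I_n]]) = n,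
      (forall i, cols_indep (Amx a i)) &
      (forall i, cols_indep (Bmx a i))].

From HB Require Import structures.
From mathcomp Require Import all_boot all_order all_algebra.
Import Order.TTheory GRing.Theory Num.Theory.
Local Open Scope ring_scope.

(* Fix a state b. Since the columns of A_b are independent, the n vectors
   a_{b,s} are pairwise distinct, so they exhaust the n distinct vectors a_{i,j}:
   e_i * e_j = e_b * e_{s_i(j)} for a map s_i, injective by independence of A_i.
   Associativity and commutativity make s_i a symmetry of the coefficients of
   e_b: a_{b,j}(k) = a_{b,s_i(j)}(s_i(k)). As s_j(b) = j and s_i(j) = s_j(i),
   this gives a_{i,j}(j) = a_{b,s_i(j)}(j) = a_{b,s_j(i)}(s_j(b)) = a_{b,i}(b),
   and taking b = i gives a_{i,j}(j) = a_{i,i}(i). *)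

Lemma cols_indep_mulmxI {R : realFieldType} {n : nat} {M : 'M[R]_n}
    {x y : 'cV[R]_n} :
  cols_indep M -> M *m x = M *m y -> x = y.
Proof.
rewrite /cols_indep row_free_unit unitmx_tr => hM hxy.
by rewrite -(mulKmx hM x) hxy mulKmx.
Qed.

Lemma avecE (R : realFieldType) (n : nat) (a : hyper_coeffs R n) (i k : 'I_n) :
  avec a i k = Amx a i *m delta_mx k 0.
Proof.
apply/matrixP => m z; rewrite !mxE (bigD1 k) //= big1 => [|l /negbTE hl].
  by rewrite !mxE !eqxx ord1 addr0 mulr1.
by rewrite !mxE hl mulr0.
Qed.

Lemma avec_inj {R : realFieldType} {n : nat} {a : hyper_coeffs R n} {i : 'I_n} :
  cols_indep (Amx a i) -> injective (avec a i).
Proof.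
move=> hAi k l /eqP; rewrite !avecE => /eqP /(cols_indep_mulmxI hAi).
move/matrixP => /(_ k 0); rewrite !mxE !eqxx /=.
by case: eqP => // _ /eqP; rewrite oner_eq0.
Qed.

Section DerivedFromGroup.

Variables (R : realFieldType) (n : nat) (a : hyper_coeffs R n).
Hypothesis a_comm : forall i j k, a i j k = a j i k.
Hypothesis a_assoc : forall i j l m,
  \sum_(k < n) a i j k * a k l m = \sum_(k < n) a j l k * a i k m.
Hypothesis size_avecs :
  size (undup [seq avec a ij.1 ij.2 | ij <- enum [set: 'I_n * 'I_n]]) = n.
Hypothesis cols_indep_A : forall i, cols_indep (Amx a i).
Variable b : 'I_n.

Lemma avec_in_row_b i j : exists s, avec a i j = avec a b s.
Proof.
pose S := undup [seq avec a ij.1 ij.2 | ij <- enum [set: 'I_n * 'I_n]].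
have in_S k l : avec a k l \in S.
  by rewrite mem_undup; apply/mapP; exists (k, l); rewrite ?mem_enum ?in_setT.
have uniq_b : uniq [seq avec a b s | s <- enum 'I_n].
  by rewrite map_inj_uniq ?enum_uniq //; apply: avec_inj.
have sub_S : {subset [seq avec a b s | s <- enum 'I_n] <= S}.
  by move=> _ /mapP [s _ ->]; apply: in_S.
have size_S : (size S <= size [seq avec a b s | s <- enum 'I_n])%N.
  by rewrite /S size_avecs size_map size_enum_ord.
have [_ eq_Sb] := uniq_min_size uniq_b sub_S size_S.
have /mapP [s _ ->] : avec a i j \in [seq avec a b s | s <- enum 'I_n].
  by rewrite eq_Sb in_S.
by exists s.
Qed.

Definition shift (i j : 'I_n) : 'I_n :=
  odflt j [pick s | avec a i j == avec a b s].

Lemma avec_shift i j : avec a i j = avec a b (shift i j).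
Proof.
rewrite /shift; case: pickP => [s /eqP // | none].
by have [s hs] := avec_in_row_b i j; move: (none s); rewrite hs eqxx.
Qed.

Lemma coeff_shift i j m : a i j m = a b (shift i j) m.
Proof. by move/matrixP: (avec_shift i j) => /(_ m 0); rewrite !mxE. Qed.

Lemma shift_inj i : injective (shift i).
Proof.
move=> k l e; apply: (avec_inj (cols_indep_A i)).
by rewrite (avec_shift i k) (avec_shift i l) e.
Qed.

Lemma shiftC i j : shift i j = shift j i.
Proof.
apply: (avec_inj (cols_indep_A b)); rewrite -!avec_shift.
by apply/matrixP => m z; rewrite !mxE a_comm.
Qed.

Lemma shift_b j : shift j b = j.
Proof.
apply: (avec_inj (cols_indep_A b)); rewrite -avec_shift.
by apply/matrixP => m z; rewrite !mxE a_comm.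
Qed.

Lemma assoc_swap i j m :
  \sum_(k < n) a b j k * a i k m = \sum_(k < n) a i j k * a b k m.
Proof.
rewrite -a_assoc -(a_assoc b i j m).
by apply: eq_bigr => k _; rewrite a_comm.
Qed.

Lemma coeff_b_shift i j k : a b j k = a b (shift i j) (shift i k).
Proof.
pose c : 'cV[R]_n := \col_s a b j (invF (shift_inj i) s).
suff /(cols_indep_mulmxI (cols_indep_A b)) /matrixP /(_ (shift i k) 0) :
    Amx a b *m c = Amx a b *m avec a b (shift i j).
  by rewrite !mxE invF_f.
apply/matrixP => m z; rewrite !mxE (reindex_inj (shift_inj i)) /=.
transitivity (\sum_(l < n) a b j l * a i l m).
  by apply: eq_bigr => l _; rewrite !mxE invF_f (coeff_shift i l m) mulrC.
rewrite assoc_swap; apply: eq_bigr => l _.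
by rewrite !mxE (coeff_shift i j l) mulrC.
Qed.

Lemma diag_coeff i j : a i j j = a b i b.
Proof. by rewrite coeff_shift (coeff_b_shift j i b) shift_b shiftC. Qed.

End DerivedFromGroup.

Theorem corollary2 (R : realFieldType) (n : nat) (a : hyper_coeffs R n)
  (hH : is_comm_semihypergroup a) (hA : derived_from_group a) :
  forall i j : 'I_n, a i j j = a i i i.
Proof.
case: hH => _ _ a_comm a_assoc; case: hA => size_avecs cols_indep_A _ i j.
exact: (@diag_coeff R n a a_comm a_assoc size_avecs cols_indep_A i i j).
Qed.
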